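(* Assume (A1) and (A2). Let $t_0\le t_1$ and $B>0$ be such that: (1) the sets $\mathcal{U}^{(t)}_{\pm y,\pm}$ and $\mathcal{V}^{(t)}_{\pm y,\pm}$ do not depend on $t\in[t_0,t_1]$; (2) $\max_{r}\langle\mathbf{w}^{(t)}_{y,r},y\mathbf{u}\rangle<B(\beta^*_{\mathbf{u}}m)^{1/2}$ for all $t\in[t_0,t_1]$; (3) $\min_r\langle\mathbf{w}^{(t)}_{-y,r},-y\mathbf{u}\rangle>-0.1$ and $\min_r\langle\mathbf{w}^{(t)}_{-y,r},-y\mathbf{v}\rangle>-0.1$ for all $t\in[t_0,t_1]$; (4) $\frac1m\sum_r\sigma(\langle\mathbf{w}^{(t)}_{y,r},y\mathbf{v}\rangle)<\delta$ for all $t\in[t_0,t_1]$; (5) $-2\le1-yf(\mathbf{x};\mathbf{W}^{(t)})\le1$ for all $t\in[t_0,t_1]$. Then, with $\epsilon=(\delta-\delta(1.05-\delta)^{1/2})/4$, $$\sum_{s=t_0}^{t_1-1}\big(1-yf(\mathbf{x};\mathbf{W}^{(s)})\big)\ge2\epsilon(t_1-t_0)-\frac{mB}{\eta\|\mathbf{u}\|_2^2\sqrt{1.05-\delta}},$$ and for every $r$ with $\langle\mathbf{w}^{(t_0)}_{y,r},y\mathbf{v}\rangle>0$, $$\langle\mathbf{w}^{(t_1)}_{y,r},y\mathbf{v}\rangle\ge\langle\mathbf{w}^{(t_0)}_{y,r},y\mathbf{v}\rangle\exp\Big\{\frac{\eta\|\mathbf{v}\|_2^2\epsilon}{m}(t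_1-t_0)-\frac{\|\mathbf{v}\|_2^2}{\|\mathbf{u}\|_2^2}\cdot\frac{B}{(1.05-\delta)^{1/2}}\Big\}.$$
   Context: Single-data setting: $\mathbf{u},\mathbf{v}\in\mathbb{R}^d$ are fixed nonzero vectors with $\langle\mathbf{u},\mathbf{v}\rangle=0$, $y\in\{\pm1\}$, and the single training example is $(\mathbf{x},y)$ with $\mathbf{x}=(y\mathbf{u},y\mathbf{v})$. Let $\sigma(z)=(\max\{z,0\})^2$ (so $\sigma'(z)=2\max\{z,0\}$). Weights $\mathbf{W}=\{\mathbf{w}_{j,r}\}_{j\in\{\pm1\},r\in[m]}\subset\mathbb{R}^d$; network $f(\mathbf{x};\mathbf{W})=\sum_{j\in\{\pm1\}}jF_j(\mathbf{x};\mathbf{W})$ with $F_j(\mathbf{x};\mathbf{W})=\frac1m\sum_{r\in[m]}[\sigma(\langle\mathbf{w}_{j,r},y\mathbf{u}\rangle)+\sigma(\langle\mathbf{w}_{j,r},y\mathbf{v}\rangle)]$; loss $L(\mathbf{W})=\frac12(f(\mathbf{x};\mathbf{W})-y)^2$. All entries of all $\mathbf{w}^{(0)}_{j,r}$ are i.i.d. $N(0,\sigma_0^2)$, and for $t\ge0$: $\mathbf{w}^{(t+1)}_{j,r}=\mathbf{w}^{(t)}_{j,r}-\frac{\eta j}{m}(f(\mathbf{x};\mathbf{W}^{(t)})-y)\big(\sigma'(\langle\mathbf{w}^{(t)}_{j,r},y\mathbf{u}\rangle)y\mathbf{u}+\sigma'(\langle\mathbf{w}^{(t)}_{j,r},y\mathbf{v}\rangle)y\mathbf{v}\big)$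 with learning rate $\eta>0$. (A1) Conditions: $m/(4\|\mathbf{u}\|_2^2)\le\eta\le2m/(5\|\mathbf{u}\|_2^2)$; $\sigma_0=\tilde\Theta(\max\{\|\mathbf{u}\|_2,\|\mathbf{v}\|_2\}^{-1}d^{-1/2})$; $\|\mathbf{v}\|_2<0.01\|\mathbf{u}\|_2$; $d=\Omega(\mathrm{polylog}(m))$. (A2) Oscillation: there is a constant $\delta\in(0.2,0.8)$ with $|yf(\mathbf{x};\mathbf{W}^{(t)})-1|\ge\delta$ for every $t\ge0$. Neuron sets: for $j\in\{\pm1\}$, $\mathcal{U}^{(t)}_{j,+}=\{r\in[m]:\langle\mathbf{w}^{(t)}_{j,r},j\mathbf{u}\rangle>0\}$, $\mathcal{U}^{(t)}_{j,-}=[m]\setminus\mathcal{U}^{(t)}_{j,+}$; $\mathcal{V}^{(t)}_{j,\pm}$ likewise with $\mathbf{v}$. Here $\beta^*_{\mathbf{u}}=\max_{r}\sigma(\langle\mathbf{w}^{(t_0)}_{y,r},y\mathbf{u}\rangle)/\sum_{r}\sigma(\langle\mathbf{w}^{(t_0)}_{y,r},y\mathbf{u}\rangle)$ (assumed well defined). *)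

From Stdlib Require Import Reals Lra.
Open Scope R_scope.

(* vectors in R^d are represented as functions nat -> R (only indices < d matter) *)
Definition vec := nat -> R.

Fixpoint rsum (n : nat) (g : nat -> R) : R :=
  match n with O => 0 | S k => rsum k g + g k end.

(* maximum over r < m of g r (for m >= 1; equals g 0 when m = 0) *)
Fixpoint rmax (m : nat) (g : nat -> R) : R :=
  match m with O => g O | S O => g O | S k => Rmax (rmax k g) (g k) end.

Definition inner (d : nat) (a b : vec) : R := rsum d (fun i => a i * b i).
Definition sqnorm (d : nat) (a : vec) : R := inner d a a.
Definition scal (c : R) (a : vec) : vec := fun i => c * a i.

Definition act (z : R) : R := (Rmax z 0) ^ 2.
Definition dact (z : R) : R := 2 * Rmax z 0.

(* weights: W j r is the weight vector w_{j,r}; j is used only for j = 1, -1 *)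
Definition weights := R -> nat -> vec.

(* F_j(x;W) with x = (y u, y v) *)
Definition Fj (d m : nat) (u v : vec) (y : R) (W : weights) (j : R) : R :=
  / INR m * rsum m (fun r => act (inner d (W j r) (scal y u))
                              + act (inner d (W j r) (scal y v))).

Definition fnet (d m : nat) (u v : vec) (y : R) (W : weights) : R :=
  Fj d m u v y W 1 - Fj d m u v y W (-1).

(* one gradient descent step on L(W) = 1/2 (f(x;W) - y)^2 *)
Definition gd_step (d m : nat) (eta : R) (u v : vec) (y : R) (W : weights) : weights :=
  fun j r i =>
    W j r i - eta * j / INR m * (fnet d m u v y W - y) *
      (dact (inner d (W j r) (scal y u)) * (y * u i)
       + dact (inner d (W j r) (scal y v)) * (y * v i)).

Fixpoint traj (d m : nat) (eta : R) (u v : vec) (y : R) (W0 : weights) (t : nat)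
  : weights :=
  match t with
  | O => W0
  | S k => gd_step d m eta u v y (traj d m eta u v y W0 k)
  end.

(* Along the phase the activation pattern is frozen, so each active neuron of class [y]
   has its [u]-coordinate multiplied by [1 + gain * l_t] at step [t], where
   [l_t = 1 - y f(x; W^(t))] and [gain = 2 eta |u|^2 / m].  Hence
   [alpha_t = (1/m sum_r sigma(<w_{y,r}, y u>))^(1/2)] satisfies
   [alpha_(t+1) = alpha_t (1 + gain l_t)].  Writing [y f = alpha^2 + (v-part) - F_{-y}],
   (A2), (3) and (4) leave two cases: [l_t >= delta] with [alpha_t^2 < 1.05 - delta = rho^2],
   or [l_t <= -delta] with [alpha_t^2 > 1].  With [k = (1 + rho) / (2 rho)] both give
   [l_t (1 - k alpha_t) >= 2 eps], i.e. [gain (l_t - 2 eps) >= k (alpha_(t+1) - alpha_t)];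
   telescoping and [alpha_(t0) < B] (from (2)) bound the loss sum.  The [v]-coordinates
   of active neurons are multiplied by [1 + gain |v|^2/|u|^2 l_t], and
   [exp (x - 2 x^2) <= 1 + x] turns the loss-sum bound into the exponential one. *)

From Stdlib Require Import Reals Lra Lia Psatz.
Open Scope R_scope.

Lemma rsum_ext n f g : (forall i, (i < n)%nat -> f i = g i) -> rsum n f = rsum n g.
Proof. induction n; intros H; simpl; auto. rewrite IHn, H; auto. Qed.

Lemma rsum_add n f g : rsum n (fun i => f i + g i) = rsum n f + rsum n g.
Proof. induction n; simpl; [ring | rewrite IHn; ring]. Qed.

Lemma rsum_scal n c f : rsum n (fun i => c * f i) = c * rsum n f.
Proof. induction n; simpl; [ring | rewrite IHn; ring]. Qed.

Lemma rsum_const n c : rsum n (fun _ => c) = c * INR n.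
Proof. induction n; simpl rsum; [simpl; ring | rewrite IHn, S_INR; ring]. Qed.

Lemma rsum_le n f g : (forall i, (i < n)%nat -> f i <= g i) -> rsum n f <= rsum n g.
Proof.
  induction n; intros H; simpl; [lra |].
  assert (rsum n f <= rsum n g) by (apply IHn; auto).
  pose proof (H n ltac:(lia)). lra.
Qed.

Lemma rsum_ge0 n f : (forall i, (i < n)%nat -> 0 <= f i) -> 0 <= rsum n f.
Proof. intros H. rewrite <- (Rmult_0_l (INR n)), <- rsum_const. now apply rsum_le. Qed.

Lemma rsum_gt0_ex n f : 0 < rsum n f -> exists i, (i < n)%nat /\ 0 < f i.
Proof.
  induction n; simpl; intros H; [lra |].
  destruct (Rlt_dec 0 (f n)) as [Hn | Hn]; [exists n; split; auto |].
  destruct IHn as [i [Hi Hf]]; [lra | exists i; split; auto].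
Qed.

Lemma rsum_telescope_le (T : nat) (l p : nat -> R) (c e k : R) :
  (forall s, (s < T)%nat -> k * (p (S s) - p s) <= c * (l s - e)) ->
  k * (p T - p 0%nat) <= c * (rsum T l - e * INR T).
Proof.
  induction T; intros H; simpl rsum; [simpl; lra |].
  assert (k * (p T - p 0%nat) <= c * (rsum T l - e * INR T)) by (apply IHT; auto).
  pose proof (H T ltac:(lia)). rewrite S_INR. lra.
Qed.

Lemma rmax_ge m g r : (r < m)%nat -> g r <= rmax m g.
Proof.
  induction m; intros H; [lia |].
  destruct m; [simpl; replace r with 0%nat by lia; lra |].
  change (rmax (S (S m)) g) with (Rmax (rmax (S m) g) (g (S m))).
  destruct (Nat.eq_dec r (S m)); [subst; apply Rmax_r |].
  eapply Rle_trans; [apply IHm; lia | apply Rmax_l].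
Qed.

Lemma inner_scal_r d a c w : inner d a (scal c w) = c * inner d a w.
Proof. unfold inner, scal. rewrite <- rsum_scal. apply rsum_ext; intros; ring. Qed.

Lemma inner_comm d a b : inner d a b = inner d b a.
Proof. unfold inner. apply rsum_ext; intros; ring. Qed.

Lemma exp_sub_twice_sq_le x : -1/2 <= x -> exp (x - 2 * x ^ 2) <= 1 + x.
Proof.
  intros Hx.
  pose proof (exp_ineq1_le (- (x - 2 * x ^ 2))) as H. rewrite exp_Ropp in H.
  pose proof (exp_pos (x - 2 * x ^ 2)) as Hpos.
  set (E := exp (x - 2 * x ^ 2)) in *.
  assert (HE : E * (1 - x + 2 * x ^ 2) <= 1).
  { apply Rmult_le_compat_l with (r := E) in H; [| lra].
    rewrite Rinv_r in H; lra. }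
  (* (1 + x) (1 - x + 2 x^2) = 1 + x^2 (1 + 2 x) >= 1 *)
  assert ((1 + x) * (1 - x + 2 * x ^ 2) >= 1) by nra.
  nra.
Qed.

Lemma act_ge0 z : 0 <= act z.
Proof. unfold act. nra. Qed.

Lemma act_le z z' : z <= z' -> act z <= act z'.
Proof. intros. unfold act, Rmax. destruct (Rle_dec z 0), (Rle_dec z' 0); nra. Qed.

Lemma act_of_pos z : 0 < z -> act z = z ^ 2.
Proof. intros. unfold act. rewrite Rmax_left; lra. Qed.

Lemma act_of_nonpos z : z <= 0 -> act z = 0.
Proof. intros. unfold act. rewrite Rmax_right; [ring | lra]. Qed.

Lemma act_lt z : z < 0.1 -> act z <= 0.01.
Proof. intros. unfold act, Rmax. destruct (Rle_dec z 0); nra. Qed.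

Lemma rmax_act m g : rmax m (fun r => act (g r)) = act (rmax m g).
Proof.
  induction m; [reflexivity |]. destruct m; [reflexivity |].
  change (rmax (S (S m)) (fun r => act (g r))) with
    (Rmax (rmax (S m) (fun r => act (g r))) (act (g (S m)))).
  change (rmax (S (S m)) g) with (Rmax (rmax (S m) g) (g (S m))).
  rewrite IHm. unfold Rmax at 2. destruct (Rle_dec (rmax (S m) g) (g (S m))).
  - apply Rmax_right, act_le; auto.
  - apply Rmax_left, act_le; lra.
Qed.

Lemma add_dact_of_pos h z : 0 < z -> z + h * dact z = z * (1 + 2 * h).
Proof. intros. unfold dact. rewrite Rmax_left; [ring | lra]. Qed.

Lemma act_add_dact h z : 0 <= 1 + 2 * h -> act (z + h * dact z) = act z * (1 + 2 * h) ^ 2.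
Proof.
  intros Hh. destruct (Rle_lt_dec z 0) as [Hz | Hz].
  - unfold dact. rewrite Rmax_right by lra.
    replace (z + h * (2 * 0)) with z by ring. rewrite act_of_nonpos by lra. ring.
  - rewrite add_dact_of_pos by auto. unfold act.
    rewrite !Rmax_left by nra. ring.
Qed.

Definition mean_act (m : nat) (g : nat -> R) : R := / INR m * rsum m (fun r => act (g r)).

Lemma mean_act_ge0 m g : 0 <= mean_act m g.
Proof.
  unfold mean_act. destruct m; [simpl; rewrite Rinv_0; lra |].
  apply Rmult_le_pos; [left; apply Rinv_0_lt_compat, lt_0_INR; lia |].
  apply rsum_ge0; intros; apply act_ge0.
Qed.

Lemma mean_act_add_dact m h g : 0 <= 1 + 2 * h ->
  mean_act m (fun r => g r + h * dact (g r)) = mean_act m g * (1 + 2 * h) ^ 2.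
Proof.
  intros Hh. unfold mean_act.
  rewrite Rmult_assoc. f_equal. rewrite Rmult_comm, <- rsum_scal.
  apply rsum_ext; intros. rewrite act_add_dact by auto. ring.
Qed.

Lemma sqrt_mean_act_lt m g B : (0 < m)%nat ->
  0 < rsum m (fun r => act (g r)) ->
  rmax m g < B * sqrt (rmax m (fun r => act (g r)) / rsum m (fun r => act (g r)) * INR m) ->
  sqrt (mean_act m g) < B.
Proof.
  intros Hm HS Hmax. rewrite rmax_act in Hmax.
  set (S0 := rsum m (fun r => act (g r))) in *. set (z := rmax m g) in *.
  assert (HM : 0 < INR m) by (apply lt_0_INR; auto).
  assert (Hz : 0 < z).
  { destruct (rsum_gt0_ex _ _ HS) as [r [Hr Hact]].
    destruct (Rle_lt_dec (g r) 0); [rewrite act_of_nonpos in Hact; lra |].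
    pose proof (rmax_ge m g r Hr) as Hle. fold z in Hle. lra. }
  rewrite act_of_pos in Hmax by auto.
  set (q := z ^ 2 / S0 * INR m) in *.
  assert (Hq : 0 <= q).
  { unfold q. apply Rmult_le_pos; [apply Rmult_le_pos; [| left; apply Rinv_0_lt_compat] |]; nra. }
  pose proof (sqrt_sqrt q Hq). pose proof (sqrt_pos q).
  assert (HB : 0 < B) by nra.
  assert (Hsq : z ^ 2 < B ^ 2 * q) by nra.
  assert (HS0 : S0 < B ^ 2 * INR m).
  { unfold q in Hsq. apply Rmult_lt_reg_r with (z ^ 2 / S0); [apply Rdiv_lt_0_compat; nra |].
    replace (B ^ 2 * INR m * (z ^ 2 / S0)) with (B ^ 2 * (z ^ 2 / S0 * INR m)) by ring.
    replace (S0 * (z ^ 2 / S0)) with (z ^ 2) by (field; lra). lra. }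
  assert (Hmean : mean_act m g < B ^ 2).
  { unfold mean_act. fold S0. apply Rmult_lt_reg_l with (INR m); auto.
    rewrite <- Rmult_assoc, Rinv_r; lra. }
  pose proof (sqrt_sqrt _ (mean_act_ge0 m g)). pose proof (sqrt_pos (mean_act m g)).
  destruct (Rlt_le_dec (sqrt (mean_act m g)) B); auto. nra.
Qed.

Section GradientStep.
Variables (d m : nat) (eta : R) (u v : vec) (y : R).
Hypotheses (Hy : y = 1 \/ y = -1) (Huv : inner d u v = 0).

Lemma inner_gd_step W j r w :
  inner d (gd_step d m eta u v y W j r) w =
  inner d (W j r) w - eta * j / INR m * (fnet d m u v y W - y) *
   (dact (inner d (W j r) (scal y u)) * y * inner d u w
    + dact (inner d (W j r) (scal y v)) * y * inner d v w).
Proof.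
  unfold inner at 1, gd_step.
  set (C := eta * j / INR m * (fnet d m u v y W - y)).
  set (Du := dact (inner d (W j r) (scal y u))).
  set (Dv := dact (inner d (W j r) (scal y v))).
  rewrite (rsum_ext _ _ (fun i => W j r i * w i + ((- C * Du * y) * (u i * w i)
      + (- C * Dv * y) * (v i * w i)))) by (intros; ring).
  rewrite !rsum_add, !rsum_scal. unfold inner. ring.
Qed.

Lemma gd_step_inner_u W r :
  inner d (gd_step d m eta u v y W y r) (scal y u) =
  inner d (W y r) (scal y u)
  + (eta * (1 - y * fnet d m u v y W) * sqnorm d u / INR m) * dact (inner d (W y r) (scal y u)).
Proof.
  rewrite inner_gd_step, !inner_scal_r, (inner_comm d v u), Huv. unfold sqnorm.
  destruct Hy; subst; unfold Rdiv; ring.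
Qed.

Lemma gd_step_inner_v W r :
  inner d (gd_step d m eta u v y W y r) (scal y v) =
  inner d (W y r) (scal y v)
  + (eta * (1 - y * fnet d m u v y W) * sqnorm d v / INR m) * dact (inner d (W y r) (scal y v)).
Proof.
  rewrite inner_gd_step, !inner_scal_r, Huv. unfold sqnorm.
  destruct Hy; subst; unfold Rdiv; ring.
Qed.

Lemma y_fnet_decomp W : y * fnet d m u v y W =
  mean_act m (fun r => inner d (W y r) (scal y u))
  + mean_act m (fun r => inner d (W y r) (scal y v)) - Fj d m u v y W (- y).
Proof.
  unfold fnet, mean_act. destruct Hy; subst.
  - replace (- (1)) with (-1) by ring. unfold Fj at 1. rewrite rsum_add. ring.
  - replace (- -1) with 1 by ring. unfold Fj at 2. rewrite rsum_add. ring.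
Qed.

(* [Fj W (-y)] evaluates the class [-y] weights on [y u] and [y v]: the inner products
   bounded below in (3) appear here with the opposite sign. *)
Lemma Fj_opposite_bounds W : (0 < m)%nat ->
  (forall r, (r < m)%nat -> inner d (W (- y) r) (scal (- y) u) > -0.1 /\
                           inner d (W (- y) r) (scal (- y) v) > -0.1) ->
  0 <= Fj d m u v y W (- y) <= 0.02.
Proof.
  intros Hm H. unfold Fj.
  assert (HM : 0 < INR m) by (apply lt_0_INR; auto).
  set (S0 := rsum m _).
  assert (0 <= S0 <= 0.02 * INR m).
  { split.
    - apply rsum_ge0. intros r _. pose proof (act_ge0 (inner d (W (- y) r) (scal y u))).
      pose proof (act_ge0 (inner d (W (- y) r) (scal y v))). lra.
    - rewrite <- rsum_const. apply rsum_le. intros r Hr. destruct (H r Hr) as [Hu Hv].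
      rewrite inner_scal_r in Hu, Hv.
      pose proof (act_lt (inner d (W (- y) r) (scal y u)) ltac:(rewrite inner_scal_r; lra)).
      pose proof (act_lt (inner d (W (- y) r) (scal y v)) ltac:(rewrite inner_scal_r; lra)).
      lra. }
  assert (Hinv : / INR m * INR m = 1) by (field; lra).
  pose proof (Rinv_0_lt_compat _ HM). split; nra.
Qed.

End GradientStep.

Lemma oscillation_dichotomy yf A V F delta :
  yf = A + V - F -> 0 <= V < delta -> 0 <= F <= 0.02 -> Rabs (yf - 1) >= delta ->
  (delta <= 1 - yf /\ A < 1.05 - delta) \/ (1 - yf <= - delta /\ 1 < A).
Proof.
  intros E HV HF HA. unfold Rabs in HA.
  destruct (Rcase_abs (yf - 1)); [left | right]; split; lra.
Qed.

Lemma potential_step_bound delta rho al ell :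
  0 < delta -> 0 < rho < 1 -> 0 <= al ->
  (delta <= ell /\ al * al < rho * rho) \/ (ell <= - delta /\ 1 < al * al) ->
  delta * (1 - rho) / 2 <= ell * (1 - (1 + rho) / (2 * rho) * al).
Proof.
  intros Hd Hrho Hal Hcase. set (k := (1 + rho) / (2 * rho)).
  assert (Hk : k * rho = (1 + rho) / 2) by (unfold k; field; lra).
  assert (Hk1 : k - 1 >= (1 - rho) / 2).
  { unfold k. apply Rle_ge, Rmult_le_reg_r with (2 * rho); [lra |].
    replace ((1 + rho) / (2 * rho) - 1) with ((1 - rho) / (2 * rho)) by (field; lra).
    replace ((1 - rho) / (2 * rho) * (2 * rho)) with (1 - rho) by (field; lra). nra. }
  replace (delta * (1 - rho) / 2) with (delta * ((1 - rho) / 2)) by field.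
  destruct Hcase as [[Hl Hal2] | [Hl Hal2]].
  - assert (al < rho) by nra.
    assert ((1 - rho) / 2 <= 1 - k * al) by nra.
    apply Rmult_le_compat; lra.
  - assert (1 < al) by nra.
    assert ((1 - rho) / 2 <= k * al - 1) by nra.
    replace (ell * (1 - k * al)) with ((- ell) * (k * al - 1)) by ring.
    apply Rmult_le_compat; lra.
Qed.

Lemma loss_sum_lower_bound (T : nat) (ell al : nat -> R) c delta rho :
  0 < c -> 0 < delta -> 0 < rho < 1 -> (forall s, 0 <= al s) ->
  (forall s, (s < T)%nat -> al (S s) = al s * (1 + c * ell s)) ->
  (forall s, (s < T)%nat ->
     (delta <= ell s /\ al s * al s < rho * rho) \/ (ell s <= - delta /\ 1 < al s * al s)) ->
  delta * (1 - rho) / 2 * INR T - al 0%nat / (rho * c) <= rsum T ell.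
Proof.
  intros Hc Hd Hrho Hal Hstep Hcase. set (k := (1 + rho) / (2 * rho)).
  assert (Htel : k * (al T - al 0%nat) <= c * (rsum T ell - delta * (1 - rho) / 2 * INR T)).
  { apply rsum_telescope_le. intros s Hs. rewrite Hstep by auto.
    pose proof (potential_step_bound delta rho (al s) (ell s) Hd Hrho (Hal s) (Hcase s Hs))
      as Hbound.
    fold k in Hbound.
    replace (k * (al s * (1 + c * ell s) - al s)) with (c * (k * al s * ell s)) by ring.
    apply Rmult_le_compat_l; nra. }
  assert (Hk : k * rho <= 1).
  { unfold k. apply Rle_trans with ((1 + rho) / 2); [right; field |]; lra. }
  assert (Hk0 : 0 < k) by (unfold k; apply Rdiv_lt_0_compat; lra).
  pose proof (Hal T). pose proof (Hal 0%nat).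
  assert (0 <= (1 - k * rho) * al 0%nat) by (apply Rmult_le_pos; lra).
  assert (0 <= k * rho * al T) by (apply Rmult_le_pos; nra).
  apply Rmult_le_compat_l with (r := rho) in Htel; [| lra].
  apply Rmult_le_reg_l with (rho * c); [nra |].
  replace (rho * c * (delta * (1 - rho) / 2 * INR T - al 0%nat / (rho * c)))
    with (rho * (c * (delta * (1 - rho) / 2 * INR T)) - al 0%nat) by (field; lra).
  nra.
Qed.

Lemma growth_lower_bound (T : nat) (b x : nat -> R) :
  0 < b 0%nat -> (forall s, (s < T)%nat -> -1/2 <= x s) ->
  (forall s, (s < T)%nat -> 0 < b s -> b (S s) = b s * (1 + x s)) ->
  b 0%nat * exp (rsum T (fun s => x s - 2 * x s ^ 2)) <= b T.
Proof.
  intros Hb0. induction T as [| T IH]; intros Hx Hstep.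
  - simpl. rewrite exp_0. lra.
  - assert (HT : b 0%nat * exp (rsum T (fun s => x s - 2 * x s ^ 2)) <= b T)
      by (apply IH; auto).
    pose proof (exp_pos (rsum T (fun s => x s - 2 * x s ^ 2))).
    pose proof (exp_pos (x T - 2 * x T ^ 2)).
    pose proof (exp_sub_twice_sq_le (x T) (Hx T ltac:(lia))).
    assert (0 < b 0%nat * exp (rsum T (fun s => x s - 2 * x s ^ 2)))
      by (apply Rmult_lt_0_compat; lra).
    cbn [rsum]. rewrite exp_plus, Hstep by (lia || lra).
    rewrite <- Rmult_assoc. apply Rmult_le_compat; lra.
Qed.

Lemma growth_from_loss_sum (T : nat) (b ell : nat -> R) g eps D :
  0 < g <= 1/4 -> 16 * g <= 3 * eps -> 0 < b 0%nat ->
  (forall s, (s < T)%nat -> -2 <= ell s <= 2) ->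
  (forall s, (s < T)%nat -> 0 < b s -> b (S s) = b s * (1 + g * ell s)) ->
  2 * eps * INR T - D <= rsum T ell ->
  b 0%nat * exp (g * eps / 2 * INR T - g * D) <= b T.
Proof.
  intros Hg Heps Hb0 Hell Hstep Hsum.
  eapply Rle_trans; [| apply (growth_lower_bound T b (fun s => g * ell s)); auto].
  2: { intros s Hs. pose proof (Hell s Hs). nra. }
  apply Rmult_le_compat_l; [lra |].
  assert (Hq : rsum T (fun s => g * ell s + - (8 * g ^ 2))
               <= rsum T (fun s => g * ell s - 2 * (g * ell s) ^ 2)).
  { apply rsum_le. intros s Hs. pose proof (Hell s Hs).
    assert (ell s ^ 2 <= 4) by nra.
    assert (g ^ 2 * ell s ^ 2 <= g ^ 2 * 4) by (apply Rmult_le_compat_l; nra).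
    nra. }
  rewrite rsum_add, rsum_scal, rsum_const in Hq.
  assert (Hsq : 8 * g ^ 2 * INR T <= 3 / 2 * g * eps * INR T).
  { pose proof (pos_INR T). apply Rmult_le_compat_r; nra. }
  destruct (Rle_lt_or_eq_dec (g * eps / 2 * INR T - g * D)
             (rsum T (fun s => g * ell s - 2 * (g * ell s) ^ 2))) as [Hlt | Heq].
  - nra.
  - left. now apply exp_increasing.
  - right. now rewrite Heq.
Qed.

Section Phase.
Variables (d m : nat) (u v : vec) (y eta delta B : R) (W0 : weights) (t0 t1 : nat).
Hypotheses (Hm : (0 < m)%nat) (Hy : y = 1 \/ y = -1) (Huv : inner d u v = 0).

Local Notation W t := (traj d m eta u v y W0 t).
Local Notation ell t := (1 - y * fnet d m u v y (W t)).
Local Notation a t r := (inner d (W t y r) (scal y u)).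
Local Notation gain := (2 * eta * sqnorm d u / INR m).

Hypothesis Hsign : forall t, (t0 <= t <= t1)%nat -> forall r, (r < m)%nat ->
  (0 < a t r <-> 0 < a t0 r).
Hypothesis Hactive : 0 < rsum m (fun r => act (a t0 r)).

Lemma traj_inner_u t r :
  a (S t) r = a t r + (eta * ell t * sqnorm d u / INR m) * dact (a t r).
Proof. exact (gd_step_inner_u d m eta u v y Hy Huv (W t) r). Qed.

(* A neuron active at [t0] stays active by (1), and its activation is multiplied by
   [1 + gain * ell t], so this factor is positive. *)
Lemma gain_factor_pos t : (t0 <= t < t1)%nat -> 0 < 1 + gain * ell t.
Proof.
  intros Ht. assert (HM : 0 < INR m) by (apply lt_0_INR; auto).
  destruct (rsum_gt0_ex _ _ Hactive) as [r [Hr Hact]].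
  assert (Hr0 : 0 < a t0 r).
  { destruct (Rle_lt_dec (a t0 r) 0); auto. rewrite act_of_nonpos in Hact; lra. }
  assert (Hpos : 0 < a t r) by (apply (Hsign t ltac:(lia) r Hr); auto).
  assert (Hnext : 0 < a (S t) r) by (apply (Hsign (S t) ltac:(lia) r Hr); auto).
  rewrite traj_inner_u, add_dact_of_pos in Hnext by auto.
  replace (1 + gain * ell t) with (1 + 2 * (eta * ell t * sqnorm d u / INR m)) by (field; lra).
  nra.
Qed.

Lemma potential_succ t : (t0 <= t < t1)%nat ->
  sqrt (mean_act m (fun r => a (S t) r)) = sqrt (mean_act m (fun r => a t r)) * (1 + gain * ell t).
Proof.
  intros Ht. assert (HM : 0 < INR m) by (apply lt_0_INR; auto).
  pose proof (gain_factor_pos t Ht) as Hgain.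
  replace (1 + gain * ell t) with (1 + 2 * (eta * ell t * sqnorm d u / INR m)) in * by (field; lra).
  assert (E : mean_act m (fun r => a (S t) r) =
              mean_act m (fun r => a t r + (eta * ell t * sqnorm d u / INR m) * dact (a t r))).
  { unfold mean_act. f_equal. apply rsum_ext. intros r _. now rewrite traj_inner_u. }
  rewrite E, mean_act_add_dact, sqrt_mult_alt, sqrt_pow2 by (apply mean_act_ge0 || lra).
  reflexivity.
Qed.

Hypothesis HA2 : forall t, Rabs (y * fnet d m u v y (W t) - 1) >= delta.
Hypothesis H3 : forall t, (t0 <= t <= t1)%nat -> forall r, (r < m)%nat ->
  inner d (W t (- y) r) (scal (- y) u) > -0.1 /\ inner d (W t (- y) r) (scal (- y) v) > -0.1.
Hypothesis H4 : forall t, (t0 <= t <= t1)%nat ->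
  mean_act m (fun r => inner d (W t y r) (scal y v)) < delta.

Lemma phase_dichotomy t : (t0 <= t <= t1)%nat ->
  (delta <= ell t /\ mean_act m (fun r => a t r) < 1.05 - delta) \/
  (ell t <= - delta /\ 1 < mean_act m (fun r => a t r)).
Proof.
  intros Ht. apply (oscillation_dichotomy _ _ _ _ _ (y_fnet_decomp d m u v y Hy (W t))).
  - split; [apply mean_act_ge0 | now apply H4].
  - now apply Fj_opposite_bounds, H3.
  - apply HA2.
Qed.

Hypotheses (Hdelta : 0.2 < delta < 0.8) (Heta : 0 < eta) (Hu : 0 < sqnorm d u).
Hypothesis H2 : rmax m (fun r => a t0 r) <
  B * sqrt (rmax m (fun r => act (a t0 r)) / rsum m (fun r => act (a t0 r)) * INR m).

Lemma phase_loss_sum_bound :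
  delta * (1 - sqrt (1.05 - delta)) / 2 * INR (t1 - t0) - B / (sqrt (1.05 - delta) * gain)
  <= rsum (t1 - t0) (fun k => ell (t0 + k)).
Proof.
  set (rho := sqrt (1.05 - delta)).
  assert (Hrho2 : rho * rho = 1.05 - delta) by (apply sqrt_sqrt; lra).
  assert (Hrho : 0 < rho < 1) by (split; [apply sqrt_lt_R0 | ]; nra).
  assert (HM : 0 < INR m) by (apply lt_0_INR; auto).
  assert (Hgain : 0 < gain) by (apply Rdiv_lt_0_compat; nra).
  set (al := fun s => sqrt (mean_act m (fun r => a (t0 + s)%nat r))).
  assert (Hal0 : al 0%nat < B) by (unfold al; rewrite Nat.add_0_r; now apply sqrt_mean_act_lt).
  eapply Rle_trans; [| apply (loss_sum_lower_bound _ _ al gain delta rho); auto; try lra].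
  - apply Rplus_le_compat_l, Ropp_le_contravar, Rmult_le_compat_r; [| lra].
    left; apply Rinv_0_lt_compat; nra.
  - intros s. apply sqrt_pos.
  - intros s Hs. unfold al. rewrite Nat.add_succ_r. apply potential_succ. lia.
  - intros s Hs. unfold al. rewrite sqrt_sqrt by apply mean_act_ge0.
    destruct (phase_dichotomy (t0 + s) ltac:(lia)); [left | right]; lra.
Qed.

Lemma traj_inner_v_succ t r : 0 < inner d (W t y r) (scal y v) ->
  inner d (W (S t) y r) (scal y v) =
  inner d (W t y r) (scal y v) * (1 + gain * (sqnorm d v / sqnorm d u) * ell t).
Proof.
  intros Hb. assert (HM : 0 < INR m) by (apply lt_0_INR; auto).
  change (W (S t)) with (gd_step d m eta u v y (W t)).
  rewrite gd_step_inner_v, add_dact_of_pos by auto. field. lra.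
Qed.

Hypothesis Ht : (t0 <= t1)%nat.
Hypothesis H5 : forall t, (t0 <= t <= t1)%nat -> -2 <= ell t <= 1.

Lemma phase_growth_v eps D r :
  let g := gain * (sqnorm d v / sqnorm d u) in
  0 < g <= 1/4 -> 16 * g <= 3 * eps -> 0 < inner d (W t0 y r) (scal y v) ->
  2 * eps * INR (t1 - t0) - D <= rsum (t1 - t0) (fun k => ell (t0 + k)) ->
  inner d (W t0 y r) (scal y v) * exp (g * eps / 2 * INR (t1 - t0) - g * D)
  <= inner d (W t1 y r) (scal y v).
Proof.
  intros g Hg Heps Hb Hsum.
  pose proof (growth_from_loss_sum (t1 - t0) (fun s => inner d (W (t0 + s) y r) (scal y v))
    (fun s => ell (t0 + s)) g eps D Hg Heps) as Hgrowth.
  cbv beta in Hgrowth. rewrite Nat.add_0_r in Hgrowth.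
  replace (t0 + (t1 - t0))%nat with t1 in Hgrowth by lia.
  apply Hgrowth; auto.
  - intros s Hs. pose proof (H5 (t0 + s)%nat ltac:(lia)). lra.
  - intros s Hs Hpos. rewrite Nat.add_succ_r. now apply traj_inner_v_succ.
Qed.

End Phase.

Lemma gain_bounds m eta U : 0 < INR m -> 0 < U ->
  INR m / (4 * U) <= eta <= 2 * INR m / (5 * U) -> 1/2 <= 2 * eta * U / INR m <= 4/5.
Proof.
  intros HM HU [Hlo Hhi].
  apply Rmult_le_compat_r with (r := U) in Hlo, Hhi; try lra.
  replace (INR m / (4 * U) * U) with (INR m / 4) in Hlo by (field; lra).
  replace (2 * INR m / (5 * U) * U) with (2 * INR m / 5) in Hhi by (field; lra).
  assert (E : 2 * eta * U / INR m * INR m = 2 * eta * U) by (field; lra).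
  split; apply Rmult_le_reg_r with (INR m); auto; rewrite E; lra.
Qed.

Lemma sqnorm_ratio_lt V U : 0 <= V -> 0 < U -> sqrt V < 0.01 * sqrt U -> V / U < 0.0001.
Proof.
  intros HV HU H. pose proof (sqrt_sqrt V HV). pose proof (sqrt_sqrt U (Rlt_le _ _ HU)).
  pose proof (sqrt_pos V). apply Rmult_lt_reg_r with U; auto.
  replace (V / U * U) with V by (field; lra). nra.
Qed.

Lemma loss_margin_gt delta : 0.2 < delta < 0.8 -> 0.002 < (delta - delta * sqrt (1.05 - delta)) / 4.
Proof.
  intros Hd. pose proof (sqrt_sqrt (1.05 - delta) ltac:(lra)).
  pose proof (sqrt_pos (1.05 - delta)).
  assert (sqrt (1.05 - delta) < 0.95) by nra. nra.
Qed.


Theorem mainTheorem10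
  (d m : nat) (u v : vec) (y eta delta B : R) (W0 : weights) (t0 t1 : nat)
  (Hm : (0 < m)%nat)
  (Hu : 0 < sqnorm d u) (Hv : 0 < sqnorm d v) (Huv : inner d u v = 0)
  (Hy : y = 1 \/ y = -1)
  (* (A1) *)
  (Heta_lo : INR m / (4 * sqnorm d u) <= eta)
  (Heta_hi : eta <= 2 * INR m / (5 * sqnorm d u))
  (Hvu : sqrt (sqnorm d v) < 0.01 * sqrt (sqnorm d u))
  (* (A2) *)
  (Hdelta : 0.2 < delta < 0.8)
  (HA2 : forall t : nat,
      Rabs (y * fnet d m u v y (traj d m eta u v y W0 t) - 1) >= delta)
  (Ht : (t0 <= t1)%nat) (HB : 0 < B)
  (* beta*_u well defined *)
  (Hbeta : 0 < rsum m (fun r => act (inner d (traj d m eta u v y W0 t0 y r) (scal y u))))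
  (* (1) *)
  (H1 : forall t : nat, (t0 <= t <= t1)%nat -> forall j : R, (j = y \/ j = - y) ->
      forall r : nat, (r < m)%nat ->
      (0 < inner d (traj d m eta u v y W0 t j r) (scal j u)
         <-> 0 < inner d (traj d m eta u v y W0 t0 j r) (scal j u)) /\
      (0 < inner d (traj d m eta u v y W0 t j r) (scal j v)
         <-> 0 < inner d (traj d m eta u v y W0 t0 j r) (scal j v)))
  (* (2) *)
  (H2 : forall t : nat, (t0 <= t <= t1)%nat ->
      rmax m (fun r => inner d (traj d m eta u v y W0 t y r) (scal y u)) <
      B * sqrt ((rmax m (fun r => act (inner d (traj d m eta u v y W0 t0 y r) (scal y u)))
                 / rsum m (fun r => act (inner d (traj d m eta u v y W0 t0 y r) (scal y u))))
                * INR m))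
  (* (3) *)
  (H3 : forall t : nat, (t0 <= t <= t1)%nat -> forall r : nat, (r < m)%nat ->
      inner d (traj d m eta u v y W0 t (- y) r) (scal (- y) u) > -0.1 /\
      inner d (traj d m eta u v y W0 t (- y) r) (scal (- y) v) > -0.1)
  (* (4) *)
  (H4 : forall t : nat, (t0 <= t <= t1)%nat ->
      / INR m * rsum m (fun r => act (inner d (traj d m eta u v y W0 t y r) (scal y v)))
        < delta)
  (* (5) *)
  (H5 : forall t : nat, (t0 <= t <= t1)%nat ->
      -2 <= 1 - y * fnet d m u v y (traj d m eta u v y W0 t) <= 1) :
  let eps := (delta - delta * sqrt (1.05 - delta)) / 4 in
  rsum (t1 - t0) (fun k => 1 - y * fnet d m u v y (traj d m eta u v y W0 (t0 + k)))
    >= 2 * eps * INR (t1 - t0)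
       - INR m * B / (eta * sqnorm d u * sqrt (1.05 - delta))
  /\
  (forall r : nat, (r < m)%nat ->
     inner d (traj d m eta u v y W0 t0 y r) (scal y v) > 0 ->
     inner d (traj d m eta u v y W0 t1 y r) (scal y v) >=
     inner d (traj d m eta u v y W0 t0 y r) (scal y v) *
       exp (eta * sqnorm d v * eps / INR m * INR (t1 - t0)
            - sqnorm d v / sqnorm d u * (B / sqrt (1.05 - delta)))).
Proof.
  intros eps.
  assert (HM : 0 < INR m) by (apply lt_0_INR; auto).
  assert (Hgain := gain_bounds m eta (sqnorm d u) HM Hu (conj Heta_lo Heta_hi)).
  assert (Hratio : sqnorm d v / sqnorm d u < 0.0001) by (apply sqnorm_ratio_lt; lra).
  assert (Heps : 0.002 < eps) by now apply loss_margin_gt.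
  assert (Hrho : 0 < sqrt (1.05 - delta)) by (apply sqrt_lt_R0; lra).
  assert (Heta : 0 < eta).
  { eapply Rlt_le_trans; [| exact Heta_lo]. apply Rdiv_lt_0_compat; lra. }
  assert (Hsum := phase_loss_sum_bound d m u v y eta delta B W0 t0 t1 Hm Hy Huv
    (fun t Ht r Hr => proj1 (H1 t Ht y (or_introl eq_refl) r Hr))
    Hbeta HA2 H3 H4 Hdelta Heta Hu (H2 t0 ltac:(lia))).
  replace (delta * (1 - sqrt (1.05 - delta)) / 2) with (2 * eps) in Hsum by (unfold eps; field).
  set (rho := sqrt (1.05 - delta)) in *. set (gain := 2 * eta * sqnorm d u / INR m) in *.
  split.
  - apply Rle_ge. eapply Rle_trans; [| exact Hsum].
    apply Rplus_le_compat_l, Ropp_le_contravar.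
    replace (INR m * B / (eta * sqnorm d u * rho)) with (2 * (B / (rho * gain)))
      by (unfold gain; field; repeat split; lra).
    assert (0 < B / (rho * gain)) by (apply Rdiv_lt_0_compat; nra).
    lra.
  - intros r Hr Hb. set (ratio := sqnorm d v / sqnorm d u) in *.
    replace (eta * sqnorm d v * eps / INR m * INR (t1 - t0) - ratio * (B / rho))
      with (gain * ratio * eps / 2 * INR (t1 - t0) - gain * ratio * (B / (rho * gain)))
      by (unfold gain, ratio; field; repeat split; lra).
    assert (0 < ratio) by (apply Rdiv_lt_0_compat; lra).
    apply Rle_ge, phase_growth_v; auto; fold ratio gain; nra.
Qed.
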